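(* Let $G$ be an $l$-group (a topological group with a basis of neighbourhoods of the identity consisting of compact open subgroups), $N\subset G$ a closed normal subgroup, $\chi$ a continuous character of $N$, and $\Gamma\subset G$ a discrete subgroup such that $\chi|_{\Gamma\cap N}\equiv1$, the image of $\Gamma$ in $G/N$ is discrete, and conjugation by $\Gamma$ preserves $\chi$. Let $\chi'$ be the unique character of $\Gamma N$ trivial on $\Gamma$ and extending $\chi$. Then the map of $G$-representations $$\Theta:\operatorname{Ind}_N^G\chi\to\operatorname{Ind}_{\Gamma N}^G\chi',\qquad \Theta(\phi)(g)=\sum_{\gamma\in\Gamma/(\Gamma\cap N)}\phi(\gamma g)$$ is surjective.
   Context: For a closed subgroup $H\subset G$ and a character $\rho$ of $H$, the compactly induced representation $\operatorname{Ind}_H^G\rho$ is the space of locally constant functions $f:G\to\mathbb C$ with $f(hg)=\rho(h)f(g)$ for $h\in H$, $g\in G$, whose support is compact modulo $H$, with $G$ acting by right translation. *)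

From mathcomp Require Import all_boot all_algebra.
From mathcomp Require Import all_classical all_reals all_analysis.
From mathcomp Require Import complex.
Import numFieldTopology.Exports numFieldNormedType.Exports.
Set Implicit Arguments.
Unset Strict Implicit.
Unset Printing Implicit Defensive.
Local Open Scope ring_scope.
Local Open Scope classical_set_scope.

(* The field of complex numbers C = R[i] (R a real closed complete field),
   seen as a numFieldType so that it carries its norm topology. *)
Definition Cx (R : realType) : numFieldType := R[i].

Section TopGroup.
Variables (G : topologicalType) (mul : G -> G -> G) (inv : G -> G) (e : G).

Definition is_group_law : Prop :=
  [/\ associative mul, left_id e mul & left_inverse e inv mul].

Definition is_topological_group : Prop :=
  [/\ is_group_law, continuous (fun p : G * G => mul p.1 p.2) & continuous inv].

Definition is_subgroup (H : set G) : Prop :=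
  H e /\ (forall x y, H x -> H y -> H (mul x (inv y))).

Definition is_lgroup : Prop :=
  is_topological_group /\
  (forall U, nbhs e U ->
     exists K : set G, [/\ is_subgroup K, compact K, open K & K `<=` U]).

Definition is_normal_subgroup (N : set G) : Prop :=
  is_subgroup N /\ (forall g n, N n -> N (mul (mul g n) (inv g))).

Definition is_discrete (S : set G) : Prop :=
  forall x, S x -> exists U : set G, open U /\ U `&` S = [set x].

(* A set W of G is N-saturated if it is a union of cosets gN; open subsets of
   G/N are exactly the images of open N-saturated subsets of G. *)
Definition saturated (N : set G) (W : set G) : Prop :=
  forall g n, W g -> N n -> W (mul g n).

(* The image of Gamma in G/N (quotient topology) is discrete: every point
   gamma N of the image is isolated, i.e. has an open neighbourhood in G/N
   (= image of an open N-saturated set W of G containing gamma) meeting the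
   image of Gamma only in gamma N. *)
Definition discrete_image_mod (N Gamma : set G) : Prop :=
  forall gam, Gamma gam ->
    exists W : set G, [/\ open W, saturated N W, W gam &
      forall del, Gamma del -> W del -> exists2 n, N n & del = mul gam n].

Definition grp_setmul (A B : set G) : set G :=
  [set g | exists a, exists b, [/\ A a, B b & g = mul a b]].

(* a character (homomorphism to C^x) of the subgroup H, given as a function
   on G of which only the values on H matter *)
Definition is_character (R : realType) (H : set G) (chi : G -> Cx R) : Prop :=
  (forall h k, H h -> H k -> chi (mul h k) = chi h * chi k) /\
  (forall h, H h -> chi h != 0).

Definition is_continuous_character (R : realType) (H : set G)
    (chi : G -> Cx R) : Prop :=
  is_character H chi /\ {within H, continuous chi}.

Definition locally_constant_fun (R : realType) (f : G -> Cx R) : Prop :=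
  forall x, \forall y \near x, f y = f x.

Definition supp_nz (R : realType) (f : G -> Cx R) : set G :=
  closure [set g | f g != 0].

Definition compact_mod (H : set G) (S : set G) : Prop :=
  exists K : set G, compact K /\ S `<=` grp_setmul H K.

Definition cInd (R : realType) (H : set G) (rho : G -> Cx R) : set (G -> Cx R) :=
  [set f | [/\ locally_constant_fun f,
              (forall h g, H h -> f (mul h g) = rho h * f g) &
              compact_mod H (supp_nz f)]].

Definition is_coset_transversal (Gamma N T : set G) : Prop :=
  T `<=` Gamma /\
  (forall gam, Gamma gam -> exists! r, T r /\ N (mul (inv r) gam)).

Definition Theta (R : realType) (T : set G) (phi : G -> Cx R) (g : G) : Cx R :=
  \sum_(r \in T) phi (mul r g).

End TopGroup.

From mathcomp Require Import all_boot all_algebra.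
From mathcomp Require Import all_classical all_reals all_analysis.
From mathcomp Require Import complex finmap.
Import numFieldTopology.Exports numFieldNormedType.Exports.
Local Open Scope ring_scope.
Local Open Scope classical_set_scope.
Import GRing.Theory Num.Theory.
Set Implicit Arguments.
Unset Strict Implicit.
Unset Printing Implicit Defensive.

(* Let F lie in Ind_(Gamma N)^G chi'.  Being locally constant with support
   compact modulo Gamma N, F is right invariant under a compact open subgroup
   K0 and vanishes outside Gamma N C for a compact C with C K0 = C.  Put
   m g = #{r in Gamma/(Gamma cap N) | r g in N C}.  This count is finite because
   the image of Gamma in G/N is discrete, positive on the support of F, left
   invariant under N and Gamma and right invariant under K0.  Hence
   phi = 1_(N C) F / m lies in Ind_N^G chi, and Theta phi g = F g m g / m g = F g. *)

Lemma compact_fset_nbhs_cover (X : topologicalType) (K : set X) (U : X -> set X) :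
  compact K -> (forall x, K x -> nbhs x (U x)) ->
  exists D : {fset X}, K `<=` \bigcup_(x in [set` D]) U x.
Proof.
move=> /compact_near_coveringP cK KU.
pose F := filter_from [set: {fset X}] (fun D0 => [set D | (D0 `<=` D)%fset]).
have FF : Filter F.
  apply: filter_from_filter; first by exists fset0.
  move=> A B _ _; exists (A `|` B)%fset => // D /= AB_D.
  by split; apply: fsubset_trans AB_D; [exact: fsubsetUl|exact: fsubsetUr].
have [x Kx|D0 _] := cK _ F (fun D x => exists2 y, y \in D & U y x) FF.
  exists (U x, [set D | ([fset x] `<=` D)%fset]).
    by split; [exact: KU|exists [fset x]%fset].
  by case=> y D [Uy /fsubsetP xD]; exists x => //; apply: xD; rewrite inE.
by move=> /(_ D0 (fsubset_refl _)) KD0; exists D0 => x /KD0 [y D0y Uyx]; exists y.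
Qed.

Lemma finite_subsingleton (T : Type) (A : set T) :
  (forall x y, A x -> A y -> x = y) -> finite_set A.
Proof.
move=> uA; have [[x Ax]|A0] := pselect (exists x, A x).
  apply: (@sub_finite_set _ _ [set x]); last exact: finite_set1.
  by move=> y Ay; exact: uA.
by apply: (@sub_finite_set _ _ set0) => // x Ax; apply: A0; exists x.
Qed.

Lemma indic_eq (T : Type) (V : pzRingType) (A : set T) x y :
  (A x <-> A y) -> \1_A x = \1_A y :> V.
Proof.
move=> AxAy; rewrite !indicE; have [Ax|nAx] := pselect (A x).
  by rewrite !mem_set // -AxAy.
by rewrite !memNset // -AxAy.
Qed.

Section GroupLaws.
Variables (G : Type) (mul : G -> G -> G) (inv : G -> G) (e : G).
Hypotheses (mulgA : associative mul) (mul1g : left_id e mul)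
  (mulVg : left_inverse e inv mul).

Lemma gmulgV x : mul x (inv x) = e.
Proof.
by rewrite -[LHS]mul1g -{1}(mulVg (inv x)) -mulgA (mulgA (inv x)) mulVg mul1g.
Qed.

Lemma gmulg1 x : mul x e = x.
Proof. by rewrite -(mulVg x) mulgA gmulgV mul1g. Qed.

Lemma gmulKg x y : mul (inv x) (mul x y) = y.
Proof. by rewrite mulgA mulVg mul1g. Qed.

Lemma gmulKVg x y : mul x (mul (inv x) y) = y.
Proof. by rewrite mulgA gmulgV mul1g. Qed.

Lemma gmulgK x y : mul (mul x y) (inv y) = x.
Proof. by rewrite -mulgA gmulgV gmulg1. Qed.

Lemma gmulgKV x y : mul (mul x (inv y)) y = x.
Proof. by rewrite -mulgA mulVg gmulg1. Qed.

Lemma ginvK x : inv (inv x) = x.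
Proof. by rewrite -[RHS](gmulKg (inv x)) mulVg gmulg1. Qed.

Lemma ginvM x y : inv (mul x y) = mul (inv y) (inv x).
Proof.
have xyK : mul (mul x y) (mul (inv y) (inv x)) = e.
  by rewrite mulgA gmulgK gmulgV.
by rewrite -[LHS]gmulg1 -xyK gmulKg.
Qed.

Lemma ginv1 : inv e = e.
Proof. by rewrite -[LHS]mul1g gmulgV. Qed.

Lemma normal_conjV (N : set G) x n :
  (forall g m, N m -> N (mul (mul g m) (inv g))) ->
  N n -> N (mul (mul (inv x) n) x).
Proof. by move=> nN Nn; rewrite -{2}[x]ginvK; apply: nN. Qed.

End GroupLaws.

Ltac group_simpl mA m1 mV :=
  repeat first [ rewrite !(ginvM mA m1 mV) | rewrite !(ginvK mA m1 mV)
    | rewrite !mA | rewrite !(gmulgK mA m1 mV) | rewrite !(gmulgKV mA m1 mV)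
    | rewrite !(gmulgV mA m1 mV) | rewrite !(gmulg1 mA m1 mV) | rewrite !m1
    | rewrite !mV | rewrite !(ginv1 mA m1 mV) ].

Section TopologicalGroup.
Variables (G : topologicalType) (mul : G -> G -> G) (inv : G -> G) (e : G).
Hypotheses (mulgA : associative mul) (mul1g : left_id e mul)
  (mulVg : left_inverse e inv mul).
Hypothesis mul_cont : continuous (fun p : G * G => mul p.1 p.2).

Local Notation subgroup := (is_subgroup mul inv e).

Lemma subgroupV (S : set G) x : subgroup S -> S x -> S (inv x).
Proof. by move=> [S1 SM] Sx; rewrite -[inv x]mul1g; apply: SM. Qed.

Lemma subgroupM (S : set G) x y : subgroup S -> S x -> S y -> S (mul x y).
Proof.
move=> sS Sx Sy; rewrite -[y](ginvK mulgA mul1g mulVg).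
by apply: sS.2 => //; apply: subgroupV.
Qed.

Lemma continuous_mull a : continuous (mul a).
Proof.
move=> x; apply: (@continuous_comp _ _ _ (pair a) (fun p : G * G => mul p.1 p.2)).
  by apply: cvg_pair; [exact: cvg_cst|exact: cvg_id].
exact: mul_cont.
Qed.

Lemma continuous_mulr a : continuous (mul^~ a).
Proof.
move=> x; apply: (@continuous_comp _ _ _ (pair^~ a) (fun p : G * G => mul p.1 p.2)).
  by apply: cvg_pair; [exact: cvg_id|exact: cvg_cst].
exact: mul_cont.
Qed.

Lemma continuous_conj g : continuous (fun x => mul (mul g x) (inv g)).
Proof.
move=> x; apply: (@continuous_comp _ _ _ (mul g) (mul^~ (inv g))).
  exact: continuous_mull.
exact: continuous_mulr.
Qed.

Lemma open_mull_image a (U : set G) : open U -> open (mul a @` U).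
Proof.
have -> : mul a @` U = mul (inv a) @^-1` U.
  apply/seteqP; split => [_ [u Uu <-]|y Uy] /=.
    by rewrite (gmulKg mulgA mul1g mulVg).
  by exists (mul (inv a) y); rewrite ?(gmulKVg mulgA mul1g mulVg).
by move=> oU; apply: open_comp => // x _; exact: continuous_mull.
Qed.

Lemma nbhs_mull_image a (U : set G) : open U -> U e -> nbhs a (mul a @` U).
Proof.
move=> oU Ue; apply: open_nbhs_nbhs; split; first exact: open_mull_image.
by exists e; rewrite ?(gmulg1 mulgA mul1g mulVg).
Qed.

Lemma closed_mulr_stable (K A : set G) : subgroup K -> open K ->
  (forall x k, K k -> A (mul x k) -> A x) -> closed A.
Proof.
move=> sK oK AK x clAx.
have [y [Ay [k Kk xky]]] := clAx _ (nbhs_mull_image x oK sK.1).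
by apply: (AK x k Kk); rewrite xky.
Qed.

Hypothesis lgroup : forall U, nbhs e U ->
  exists K : set G, [/\ subgroup K, compact K, open K & K `<=` U].

Lemma uniformly_locally_constant (T : Type) (f : G -> T) (K : set G) :
  (forall x, \forall y \near x, f y = f x) -> compact K ->
  exists C K0, [/\ compact C, K `<=` C, subgroup K0 /\ open K0,
    (forall c k, C c -> K0 k -> C (mul c k)) &
    (forall c k, C c -> K0 k -> f (mul c k) = f c)].
Proof.
move=> flc cK.
have Kf_ex x : exists Kx : set G,
    [/\ subgroup Kx, compact Kx, open Kx & Kx `<=` [set y | f (mul x y) = f x]].
  apply: lgroup; have : nbhs (mul x e) [set y | f y = f x].
    by rewrite (gmulg1 mulgA mul1g mulVg); exact: flc.
  exact: continuous_mull.
have [Kf Kf_spec] := choice Kf_ex.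
have Kf_open x : open (Kf x) /\ Kf x e.
  by have [[Kfe _] _ oKf _] := Kf_spec x.
have [D KD] := @compact_fset_nbhs_cover _ K (fun x => mul x @` Kf x) cK
  (fun x _ => nbhs_mull_image x (Kf_open x).1 (Kf_open x).2).
have [K0 [sK0 _ oK0 K0_sub]] :=
  lgroup (@filter_bigI _ _ D Kf _ _ (fun x _ => open_nbhs_nbhs (Kf_open x))).
have CK0 x u k : x \in D -> Kf x u -> K0 k -> Kf x (mul u k).
  move=> Dx Kxu /K0_sub/(_ x Dx); have [sKx _ _ _] := Kf_spec x.
  exact: subgroupM.
exists (\bigcup_(x in [set` D]) mul x @` Kf x), K0; split => //.
- rewrite -bigsetU_fset_set; last exact: finite_fset.
  apply: bigsetU_compact => x _; have [_ cKx _ _] := Kf_spec x.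
  by apply: continuous_compact => //; exact/continuous_subspaceT/continuous_mull.
- move=> _ k [x Dx [u Kxu <-]] K0k; exists x => //.
  by exists (mul u k); [exact: CK0|rewrite mulgA].
- move=> _ k [x Dx [u Kxu <-]] K0k; have [_ _ _ Kx_sub] := Kf_spec x.
  by rewrite -mulgA (Kx_sub _ (CK0 _ _ _ Dx Kxu K0k)) (Kx_sub _ Kxu).
Qed.

Lemma cInd_mulr_invariant (R : realType) (H : set G) (rho F : G -> Cx R) :
  cInd mul H rho F -> exists C K0, [/\ compact C, subgroup K0 /\ open K0,
    (forall c k, C c -> K0 k -> C (mul c k)),
    (forall g k, K0 k -> F (mul g k) = F g) &
    (forall g, F g != 0 -> grp_setmul mul H C g)].
Proof.
move=> [Flc Feq [K [cK supp_HK]]].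
have [C [K0 [cC KC [sK0 oK0] CK0 FC]]] := uniformly_locally_constant Flc cK.
have FHC g : F g != 0 -> grp_setmul mul H C g.
  move=> Fg; have /supp_HK[h [c [Hh Kc ->]]] : supp_nz F g.
    exact: (@subset_closure _ [set x | F x != 0]).
  by exists h, c; split => //; exact: KC.
have FK0 g k : K0 k -> F g != 0 -> F (mul g k) = F g.
  by move=> K0k /FHC [h [c [Hh Cc ->]]]; rewrite -mulgA !(Feq h) // FC.
exists C, K0; split => // g k K0k.
have [Fg0|/(FK0 _ _ K0k)//] := eqVneq (F g) 0.
have [Fgk0|/(FK0 _ _ (subgroupV sK0 K0k))] := eqVneq (F (mul g k)) 0.
  by rewrite Fg0 Fgk0.
by rewrite (gmulgK mulgA mul1g mulVg) => ->.
Qed.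

Section Transversal.
Variables (N Gamma T : set G).
Hypotheses (sN : subgroup N) (nN : forall g n, N n -> N (mul (mul g n) (inv g))).
Hypotheses (sGamma : subgroup Gamma) (Ttr : is_coset_transversal mul inv Gamma N T).

Lemma transversal_sub : T `<=` Gamma.
Proof. by have [] := Ttr. Qed.

Lemma transversal_inj r r' : T r -> T r' -> N (mul (inv r) r') -> r = r'.
Proof.
move=> Tr Tr' Nrr'; have [_ /(_ r' (transversal_sub Tr')) [t [_ tE]]] := Ttr.
by rewrite -(tE r) ?(tE r') ?mulVg; split=> //; exact: sN.1.
Qed.

Lemma transversal_rep :
  exists rep, forall x, Gamma x -> T (rep x) /\ N (mul (inv (rep x)) x).
Proof.
have rep_ex x : exists t, Gamma x -> T t /\ N (mul (inv t) x).
  have [Gx|nGx] := pselect (Gamma x); last by exists x.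
  by have [_ /(_ x Gx) [t [tP _]]] := Ttr; exists t.
by have [rep repP] := choice rep_ex; exists rep.
Qed.

Lemma fsbig_transversal_mulr (V : Type) (idx : V) (op : Monoid.com_law idx)
    (f : G -> V) gam :
  Gamma gam -> (forall x n, Gamma x -> N n -> f (mul x n) = f x) ->
  \big[op/idx]_(r \in T) f (mul r gam) = \big[op/idx]_(r \in T) f r.
Proof.
move=> Ggam fN; have [rep repP] := transversal_rep.
have TGgam r : T r -> Gamma (mul r gam).
  by move=> /transversal_sub Gr; exact: subgroupM.
rewrite [RHS](reindex_fsbig (fun r => rep (mul r gam)) T T).
  apply: eq_fsbigr => r /set_mem /TGgam /repP; set t := rep _.
  move=> [/transversal_sub Gt Nt].
  by rewrite -(gmulKVg mulgA mul1g mulVg t (mul r gam)) fN.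
split.
- by move=> r /TGgam /repP [].
- move=> r1 r2 /set_mem T1 /set_mem T2 /= rep12.
  have [_ N1] := repP _ (TGgam _ T1); have [_ N2] := repP _ (TGgam _ T2).
  rewrite rep12 in N1; set t := rep (mul r2 gam) in N1 N2.
  apply: transversal_inj => //.
  have -> : mul (inv r1) r2 = mul (mul gam (mul (inv (mul (inv t) (mul r1 gam)))
      (mul (inv t) (mul r2 gam)))) (inv gam) by group_simpl mulgA mul1g mulVg.
  by apply: nN; apply: subgroupM => //; exact: subgroupV.
- move=> t Tt; have Gtgam : Gamma (mul t (inv gam)).
    by apply: subgroupM => //; [exact: transversal_sub|exact: subgroupV].
  have [Tr Nr] := repP _ Gtgam; set r := rep (mul t (inv gam)) in Tr Nr *.
  exists r => //; have [Tt' Nt'] := repP _ (TGgam _ Tr).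
  set t' := rep _ in Tt' Nt' *; apply: transversal_inj => //.
  have -> : mul (inv t') t = mul (mul (inv t') (mul r gam))
      (mul (mul (inv gam) (mul (inv r) (mul t (inv gam)))) gam)
    by group_simpl mulgA mul1g mulVg.
  by apply: subgroupM => //; exact: (normal_conjV mulgA mul1g mulVg).
Qed.

Hypothesis discrete_Gamma_mod_N : discrete_image_mod mul N Gamma.

Lemma finite_transversal_translates (C : set G) g : compact C ->
  finite_set [set r | T r /\ grp_setmul mul N C (mul r g)].
Proof.
move=> cC; have [W [oW satW We WN]] := discrete_Gamma_mod_N sGamma.1.
(* W is an N-saturated open neighbourhood of e with Gamma `&` W `<=` N. *)
have W_inj r r' : T r -> T r' -> W (mul (inv r) r') -> r = r'.
  move=> Tr Tr' /WN[|n Nn]; last first.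
    by rewrite mul1g => rr'; apply: transversal_inj; rewrite ?rr'.
  by apply: subgroupM; [|apply: subgroupV|]; rewrite //; exact: transversal_sub.
have [Kg [sKg _ oKg KgW]] : exists Kg : set G, [/\ subgroup Kg, compact Kg,
    open Kg & Kg `<=` [set k | W (mul (mul g k) (inv g))]].
  apply: lgroup; have : nbhs (mul (mul g e) (inv g)) W.
    rewrite (gmulg1 mulgA mul1g mulVg) (gmulgV mulgA mul1g mulVg).
    exact: open_nbhs_nbhs.
  exact: continuous_conj.
have [D CD] := @compact_fset_nbhs_cover _ C (fun c => mul c @` Kg) cC
  (fun c _ => nbhs_mull_image c oKg sKg.1).
pose piece c := [set r | T r /\ grp_setmul mul N (mul c @` Kg) (mul r g)].
have piece_subsingleton c r r' : piece c r -> piece c r' -> r = r'.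
  move=> [Tr [n [_ [Nn [k Kk <-] rg]]]] [Tr' [n' [_ [Nn' [k' Kk' <-] r'g]]]].
  apply: W_inj => //.
  (* r^-1 r' is the g-conjugate of k^-1 k' times an element of N. *)
  have -> : mul (inv r) r' = mul (mul (mul g (mul (inv k) k')) (inv g))
      (mul (mul g (mul (mul (inv k') (mul (mul (inv c) (mul (inv n) n')) c)) k'))
        (inv g)).
    rewrite -[r](gmulgK mulgA mul1g mulVg r g).
    rewrite -[r'](gmulgK mulgA mul1g mulVg r' g) rg r'g.
    by group_simpl mulgA mul1g mulVg.
  apply: satW; first by apply: KgW; apply: subgroupM => //; exact: subgroupV.
  apply: nN; do 2!apply: (normal_conjV mulgA mul1g mulVg) => //.
  by apply: subgroupM => //; exact: subgroupV.
apply: (@sub_finite_set _ _ (\bigcup_(c in [set` D]) piece c)).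
  move=> r [Tr [n [c0 [Nn Cc0 rg]]]]; have [c Dc [k Kk ck]] := CD _ Cc0.
  by exists c => //; split => //; exists n, c0; split => //; exists k.
apply: bigcup_finite => [|c _]; first exact: finite_fset.
exact: finite_subsingleton (piece_subsingleton c).
Qed.

Section ThetaPreimage.
Variables (R : realType) (chi chi' F : G -> Cx R) (C K0 : set G).
Hypotheses (chi'_Gamma : forall gam, Gamma gam -> chi' gam = 1)
  (chi'_N : forall n, N n -> chi' n = chi n).
Hypothesis F_equivariant :
  forall h g, grp_setmul mul Gamma N h -> F (mul h g) = chi' h * F g.
Hypotheses (cC : compact C) (sK0 : subgroup K0) (oK0 : open K0)
  (CK0 : forall c k, C c -> K0 k -> C (mul c k)).
Hypothesis F_mulr : forall g k, K0 k -> F (mul g k) = F g.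
Hypothesis F_supp :
  forall g, F g != 0 -> grp_setmul mul (grp_setmul mul Gamma N) C g.

Local Notation NC := (grp_setmul mul N C).

Definition transversal_count g : Cx R := \sum_(r \in T) (\1_NC (mul r g) : Cx R).

Definition Theta_preimage g : Cx R := \1_NC g * F g / transversal_count g.

Lemma NC_mull n x : N n -> NC (mul n x) <-> NC x.
Proof.
move=> Nn; split; last first.
  move=> [m [c [Nm Cc ->]]]; exists (mul n m), c; rewrite mulgA.
  by split => //; exact: subgroupM.
move=> [m [c [Nm Cc nx]]]; exists (mul (inv n) m), c; rewrite -mulgA -nx.
rewrite (gmulKg mulgA mul1g mulVg); split => //.
by apply: subgroupM => //; exact: subgroupV.
Qed.

Lemma NC_mulr x k : K0 k -> NC (mul x k) <-> NC x.
Proof.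
move=> K0k; split; last first.
  move=> [m [c [Nm Cc ->]]]; exists m, (mul c k); rewrite mulgA.
  by split => //; exact: CK0.
move=> [m [c [Nm Cc xk]]]; exists m, (mul c (inv k)); rewrite mulgA -xk.
by rewrite (gmulgK mulgA mul1g mulVg); split => //; apply: CK0 => //; exact: subgroupV.
Qed.

Lemma transversal_count_mull n g : N n ->
  transversal_count (mul n g) = transversal_count g.
Proof.
move=> Nn; apply: eq_fsbigr => r _; apply: indic_eq.
have -> : mul r (mul n g) = mul (mul (mul r n) (inv r)) (mul r g).
  by group_simpl mulgA mul1g mulVg.
exact/NC_mull/nN.
Qed.

Lemma transversal_count_mulr g k : K0 k ->
  transversal_count (mul g k) = transversal_count g.
Proof.
by move=> K0k; apply: eq_fsbigr => r _; apply: indic_eq; rewrite mulgA NC_mulr.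
Qed.

Lemma transversal_count_mull_Gamma gam g : Gamma gam ->
  transversal_count (mul gam g) = transversal_count g.
Proof.
move=> Ggam; rewrite /transversal_count; under eq_fsbigr do rewrite mulgA.
pose f x : Cx R := \1_NC (mul x g).
apply: (@fsbig_transversal_mulr _ _ _ f) => // x n _ Nn; rewrite /f.
apply: indic_eq; have -> : mul (mul x n) g = mul (mul (mul x n) (inv x)) (mul x g).
  by group_simpl mulgA mul1g mulVg.
exact/NC_mull/nN.
Qed.

Lemma transversal_count_neq0 g : F g != 0 -> transversal_count g != 0.
Proof.
move=> /F_supp [_ [c [[gam [n [Ggam Nn ->]]] Cc gE]]].
have [_ /(_ _ (subgroupV sGamma Ggam)) [r [[Tr Nr] _]]] := Ttr.
have NCrg : NC (mul r g).
  exists (mul (mul r gam) n), c; split => //; last by rewrite gE !mulgA.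
  apply: subgroupM => //.
  have -> : mul r gam = mul (mul r (inv (mul (inv r) (inv gam)))) (inv r).
    by group_simpl mulgA mul1g mulVg.
  by apply: nN; exact: subgroupV.
pose S := [set t | T t /\ NC (mul t g)].
rewrite /transversal_count -(@fsbig_widen _ _ _ _ S T); first last.
- by move=> t [Tt nSt]; rewrite /= indicE memNset // => NCtg; apply: nSt.
- by move=> t [].
rewrite (fsbigD1 r) ?indicE ?mem_set //; last exact: finite_transversal_translates.
by rewrite lt0r_neq0 // ltr_wpDr ?ltr01 // fsumr_ge0 // => t _; rewrite indicE ler0n.
Qed.

Lemma Theta_preimage_mulr g k : K0 k -> Theta_preimage (mul g k) = Theta_preimage g.
Proof.
move=> K0k; rewrite /Theta_preimage F_mulr // transversal_count_mulr //.
by rewrite (indic_eq _ (NC_mulr g K0k)).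
Qed.

Lemma Theta_preimage_neq0 g : Theta_preimage g != 0 -> NC g.
Proof.
apply: contraNP => nNCg; rewrite /Theta_preimage indicE memNset //.
by rewrite !mul0r.
Qed.

Lemma Theta_preimage_cInd : cInd mul N chi Theta_preimage.
Proof.
split.
- move=> x; apply: filterS (nbhs_mull_image x oK0 sK0.1) => _ [k K0k <-].
  exact: Theta_preimage_mulr.
- move=> n g Nn; rewrite /Theta_preimage transversal_count_mull //.
  rewrite (indic_eq _ (NC_mull g Nn)) F_equivariant; last first.
    by exists e, n; rewrite mul1g; split => //; exact: sGamma.1.
  by rewrite chi'_N // mulrCA -!mulrA.
- exists C; split => //; apply: (@subset_trans _ (closure NC)).
    exact: closure_subset Theta_preimage_neq0.
  rewrite -(closure_id _).1 //.
  by apply: (closed_mulr_stable sK0 oK0) => x k K0k /(NC_mulr x K0k).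
Qed.

Lemma Theta_preimage_finite g :
  finite_set (T `&` [set r | Theta_preimage (mul r g) != 0]).
Proof.
apply: sub_finite_set (finite_transversal_translates g cC) => r [Tr /= phi_rg].
by split => //; exact: Theta_preimage_neq0.
Qed.

Lemma Theta_Theta_preimage g : F g = Theta mul T Theta_preimage g.
Proof.
have phi_rg r : T r ->
    Theta_preimage (mul r g) = \1_NC (mul r g) * (F g / transversal_count g).
  move=> /transversal_sub Gr; rewrite /Theta_preimage mulrA.
  rewrite transversal_count_mull_Gamma // F_equivariant ?chi'_Gamma ?mul1r //.
  by exists r, e; split => //; [exact: sN.1|rewrite (gmulg1 mulgA mul1g mulVg)].
rewrite /Theta; under eq_fsbigr => r /set_mem Tr do rewrite phi_rg //.
rewrite -mulr_fsuml.
have [->|Fg0] := eqVneq (F g) 0; first by rewrite mul0r mulr0.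
by rewrite mulrC divfK // transversal_count_neq0.
Qed.

End ThetaPreimage.

End Transversal.

End TopologicalGroup.

Unset Implicit Arguments.
Theorem lemma4p22 (R : realType) (G : topologicalType)
  (mul : G -> G -> G) (inv : G -> G) (e : G)
  (N Gamma : set G) (chi chi' : G -> Cx R) (T : set G) :
  is_lgroup mul inv e ->
  is_normal_subgroup mul inv e N -> closed N ->
  is_continuous_character mul N chi ->
  is_subgroup mul inv e Gamma -> is_discrete Gamma ->
  (forall gam, Gamma gam -> N gam -> chi gam = 1) ->
  discrete_image_mod mul N Gamma ->
  (forall gam n, Gamma gam -> N n -> chi (mul (mul gam n) (inv gam)) = chi n) ->
  (* chi' : the character of Gamma N trivial on Gamma and extending chi *)
  is_character mul (grp_setmul mul Gamma N) chi' ->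
  (forall gam, Gamma gam -> chi' gam = 1) ->
  (forall n, N n -> chi' n = chi n) ->
  (* T : representatives of Gamma / (Gamma cap N) *)
  is_coset_transversal mul inv Gamma N T ->
  forall F, cInd mul (grp_setmul mul Gamma N) chi' F ->
  exists phi, [/\ cInd mul N chi phi,
    (forall g, finite_set (T `&` [set r | phi (mul r g) != 0])) &
    (forall g, F g = Theta mul T phi g)].
Proof.
(* The hypotheses discarded with _ only ensure that chi' exists; it is given here. *)
move=> [[[mulgA mul1g mulVg] mul_cont _] lgroup] [sN nN] _ _ sGamma _ _ discrete_mod
  _ _ chi'_Gamma chi'_N Ttr F FI.
have [C [K0 [cC [sK0 oK0] CK0 F_mulr F_supp]]] :=
  cInd_mulr_invariant mulgA mul1g mulVg mul_cont lgroup FI.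
have [_ F_equivariant _] := FI.
exists (Theta_preimage mul N T F C); split.
- exact: (Theta_preimage_cInd mulgA mul1g mulVg mul_cont T sN nN sGamma
    chi'_N F_equivariant cC sK0 oK0 CK0 F_mulr).
- exact: (Theta_preimage_finite mulgA mul1g mulVg mul_cont lgroup sN nN sGamma
    Ttr discrete_mod F cC).
- exact: (Theta_Theta_preimage mulgA mul1g mulVg mul_cont lgroup sN nN sGamma
    Ttr discrete_mod chi'_Gamma F_equivariant cC F_supp).
Qed.
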